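(* Let $N,n_{\mathrm{el}}\ge1$, masses $m_1,\dots,m_N>0$, $M=\mathrm{diag}(m_1I_3,\dots,m_NI_3)$, $V_{\mathrm{ext}}:\mathbb{R}^{3N}\to\mathbb{R}$ continuously differentiable, $h>0$. For $i=1,\dots,n_{\mathrm{el}}$ let $k_i>0$, $l_{0,i}>0$, $a_{ij}\in\mathbb{R}$, define $\tilde C_i(q)=\frac{\bar q_i\cdot\bar q_i}{l_{0,i}^2}$ with $\bar q_i=\sum_{j=1}^Na_{ij}q_j$ ($q=(q_1,\dots,q_N)$, $q_j\in\mathbb{R}^3$), $V_{\mathrm{int},i}(c)=\frac{k_il_{0,i}}{4}(c-\ln c-1)$ for $c>0$. Define the midpoint (Gonzalez) discrete gradient $\overline{\nabla}V_{\mathrm{ext}}(q,q')=\nabla V_{\mathrm{ext}}(\tfrac{q+q'}2)+\frac{V_{\mathrm{ext}}(q')-V_{\mathrm{ext}}(q)-\nabla V_{\mathrm{ext}}(\frac{q+q'}2)\cdot(q'-q)}{|q'-q|^2}(q'-q)$ for $q'\neq q$ and $\nabla V_{\mathrm{ext}}(q)$ for $q'=q$, and the Greenspan discrete derivative $\overline{\nabla}V_{\mathrm{int}}(C,C')$ componentwise by $\frac{V_{\mathrm{int},i}(C_i')-V_{\mathrm{int},i}(C_i)}{C_i'-C_i}$ if $C_i'\ne C_i$ and $V_{\mathrm{int},i}'(\frac{C_i+C_i'}2)$ otherwise. Suppose $(q^n,v^n,C^n)$, $(q^{n+1},v^{n+1},C^{n+1})$ (positive strains) satisfy, with midpoint values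 $x^{n+1/2}=\frac12(x^n+x^{n+1})$, $$q^{n+1}-q^n=h\,v^{n+1/2},\quad M(v^{n+1}-v^n)=-h\big(\overline{\nabla}V_{\mathrm{ext}}(q^n,q^{n+1})+D\tilde C(q^{n+1/2})^{\mathrm T}\overline{\nabla}V_{\mathrm{int}}(C^n,C^{n+1})\big),\quad C^{n+1}-C^n=h\,D\tilde C(q^{n+1/2})v^{n+1/2}.$$ Let $L^m=\sum_{k=1}^Nq_k^m\times m_kv_k^m$ for $m=n,n+1$. If there is $\bar b\in\mathbb{R}^3$ such that the $k$-th three-dimensional block of $\overline{\nabla}V_{\mathrm{ext}}(q^n,q^{n+1})$ equals $-\bar b$ for every $k=1,\dots,N$, then $(L^{n+1}-L^n)\cdot\bar b=0$.
   Context: $D\tilde C(q)$ is the Jacobian of $\tilde C=(\tilde C_1,\dots,\tilde C_{n_{\mathrm{el}}})$. The scheme is the input-free midpoint discrete-gradient time discretization of the port-Hamiltonian model of $N$ point masses connected by $n_{\mathrm{el}}$ hyperelastic springs, with state (positions $q$, velocities $v$, strains $C$). *)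

From HB Require Import structures.
From mathcomp Require Import all_boot all_order all_algebra.
From mathcomp Require Import all_classical all_reals all_analysis.
Set Implicit Arguments. Unset Strict Implicit. Unset Printing Implicit Defensive.
Import Order.TTheory GRing.Theory Num.Theory.
Import numFieldNormedType.Exports.
Local Open Scope ring_scope.

(* Positions/velocities q = (q_1,...,q_N), q_j in R^3, are stored as N x 3
   matrices (row j = q_j); this is R^{3N}. *)

Definition mdot {R : pzRingType} {m n} (A B : 'M[R]_(m, n)) : R :=
  \sum_i \sum_j A i j * B i j.

Definition mid {R : realType} {m n} (A B : 'M[R]_(m, n)) : 'M[R]_(m, n) :=
  2^-1 *: (A + B).

Definition partial {R : realType} {m n} (f : 'M[R]_(m, n) -> R)
  (x : 'M[R]_(m, n)) (i : 'I_m) (j : 'I_n) : R :=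
  'D_(delta_mx i j) f x.

Definition grad {R : realType} {m n} (f : 'M[R]_(m, n) -> R)
  (x : 'M[R]_(m, n)) : 'M[R]_(m, n) :=
  \matrix_(i, j) partial f x i j.

Definition C1_fun {R : realType} {m n} (f : 'M[R]_(m, n) -> R) : Prop :=
  forall i j, (forall x, derivable f x (delta_mx i j)) /\
              continuous (fun x => partial f x i j).

Definition disc_grad_ext {R : realType} {m n} (f : 'M[R]_(m, n) -> R)
  (q q' : 'M[R]_(m, n)) : 'M[R]_(m, n) :=
  if q' == q then grad f q
  else grad f (mid q q') +
       ((f q' - f q - mdot (grad f (mid q q')) (q' - q))
          / mdot (q' - q) (q' - q)) *: (q' - q).

Definition Vint {R : realType} (kap l0 c : R) : R :=
  kap * l0 / 4 * (c - ln c - 1).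

Definition disc_grad_int {R : realType} {nel : nat} (kap l0 : 'I_nel -> R)
  (C C' : 'I_nel -> R) (i : 'I_nel) : R :=
  if C' i != C i then
    (Vint (kap i) (l0 i) (C' i) - Vint (kap i) (l0 i) (C i)) / (C' i - C i)
  else derive1 (Vint (kap i) (l0 i)) ((C i + C' i) / 2).

Definition Ctilde {R : realType} {nel N : nat} (A : 'M[R]_(nel, N))
  (l0 : 'I_nel -> R) (i : 'I_nel) (q : 'M[R]_(N, 3)) : R :=
  mdot (row i (A *m q)) (row i (A *m q)) / (l0 i) ^+ 2.

Definition jac {R : realType} {nel N : nat} (Ct : 'I_nel -> 'M[R]_(N, 3) -> R)
  (q : 'M[R]_(N, 3)) (i : 'I_nel) (j : 'I_N) (d : 'I_3) : R :=
  partial (Ct i) q j d.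

Definition jacT_apply {R : realType} {nel N : nat}
  (Ct : 'I_nel -> 'M[R]_(N, 3) -> R) (q : 'M[R]_(N, 3)) (w : 'I_nel -> R)
  : 'M[R]_(N, 3) :=
  \matrix_(j, d) \sum_i jac Ct q i j d * w i.

Definition jac_apply {R : realType} {nel N : nat}
  (Ct : 'I_nel -> 'M[R]_(N, 3) -> R) (q : 'M[R]_(N, 3)) (v : 'M[R]_(N, 3))
  (i : 'I_nel) : R :=
  \sum_j \sum_d jac Ct q i j d * v j d.

Definition cross {R : pzRingType} (u v : 'rV[R]_3) : 'rV[R]_3 :=
  let c (w : 'rV[R]_3) (k : nat) := w ord0 (inord k) in
  \row_(k < 3) match val k with
               | 0 => c u 1 * c v 2 - c u 2 * c v 1
               | 1 => c u 2 * c v 0 - c u 0 * c v 2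
               | _ => c u 0 * c v 1 - c u 1 * c v 0
               end.

Definition angmom {R : pzRingType} {N : nat} (m : 'I_N -> R)
  (q v : 'M[R]_(N, 3)) : 'rV[R]_3 :=
  \sum_(k < N) cross (row k q) (m k *: row k v).

From HB Require Import structures.
From mathcomp Require Import all_boot all_order all_algebra.
From mathcomp Require Import all_classical all_reals all_analysis.
From mathcomp Require Import ring.
Set Implicit Arguments. Unset Strict Implicit. Unset Printing Implicit Defensive.
Import Order.TTheory GRing.Theory Num.Theory.
Import numFieldNormedType.Exports.
Local Open Scope ring_scope.

(* Idea: by the discrete product rule, L^{n+1} - L^n is the sum over k of
   q_k^{n+1/2} x m_k (v_k^{n+1} - v_k^n) and (q_k^{n+1} - q_k^n) x m_k v_k^{n+1/2}.
   The second term vanishes since q^{n+1} - q^n is parallel to v^{n+1/2}.  In the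
   first, m (v^{n+1} - v^n) is h b minus h times the spring forces; the spring
   force on particle k is a combination of the vectors qbar_i with weights a_ik,
   so the total torque of the springs is a combination of the qbar_i x qbar_i,
   i.e. zero.  What remains is h (sum_k q_k^{n+1/2}) x b, orthogonal to b. *)

Lemma derive_along_quadratic (R : realType) (V : normedModType R) (f : V -> R)
    (a v : V) (c1 c2 : R) :
  (forall t : R, f (t *: v + a) = f a + t * c1 + t ^+ 2 * c2) -> 'D_v f a = c1.
Proof.
move=> fE; rewrite /derive; apply: cvg_lim => //.
have : ((fun t : R => c1 + t * c2) @ dnbhs (0 : R) --> c1)%classic.
  rewrite -[X in (_ --> X)%classic](addr0 c1) -[X in c1 + X](mul0r c2).
  by apply: cvgD; [exact: cvg_cst | apply: cvgMr_tmp; exact: nbhs_dnbhs].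
apply: cvg_trans; apply: near_eq_cvg; near=> t.
have t_neq0 : t != 0 by near: t; exact: nbhs_dnbhs_neq.
by rewrite /= fE /GRing.scale /=; field.
Unshelve. all: by end_near.
Qed.

Section Mdot.
Variables (R : realType) (m n : nat).
Implicit Types (x y z : 'M[R]_(m, n)).

Lemma mdotC x y : mdot x y = mdot y x.
Proof. by apply: eq_bigr => i _; apply: eq_bigr => j _; rewrite mulrC. Qed.

Lemma mdotDl x y z : mdot (x + y) z = mdot x z + mdot y z.
Proof.
rewrite /mdot -big_split; apply: eq_bigr => i _.
by rewrite -big_split; apply: eq_bigr => j _; rewrite mxE mulrDl.
Qed.

Lemma mdotZl c x y : mdot (c *: x) y = c * mdot x y.
Proof.
rewrite /mdot mulr_sumr; apply: eq_bigr => i _.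
by rewrite mulr_sumr; apply: eq_bigr => j _; rewrite mxE mulrA.
Qed.

Lemma mdot_line_sq t x y :
  mdot (t *: x + y) (t *: x + y) = mdot y y + t * (2 * mdot y x) + t ^+ 2 * mdot x x.
Proof.
rewrite mdotDl !mdotZl ![mdot _ (_ + _)]mdotC !mdotDl !mdotZl (mdotC x y); ring.
Qed.

End Mdot.

Section Cross.
Variable R : realType.
Implicit Types (u v w : 'rV[R]_3) (c : R).

Lemma crossDl u v w : cross (u + v) w = cross u w + cross v w.
Proof. by apply/rowP => -[[|[|[|//]]] ?]; rewrite !mxE /=; ring. Qed.

Lemma crossZl c u v : cross (c *: u) v = c *: cross u v.
Proof. by apply/rowP => -[[|[|[|//]]] ?]; rewrite !mxE /=; ring. Qed.

Lemma crossC u v : cross u v = - cross v u.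
Proof. by apply/rowP => -[[|[|[|//]]] ?]; rewrite !mxE /=; ring. Qed.

Lemma crossxx u : cross u u = 0.
Proof. by apply/rowP => -[[|[|[|//]]] ?]; rewrite !mxE /=; ring. Qed.

Lemma crossBr u v w : cross u (v - w) = cross u v - cross u w.
Proof. by apply/rowP => -[[|[|[|//]]] ?]; rewrite !mxE /=; ring. Qed.

Lemma crossZr c u v : cross u (c *: v) = c *: cross u v.
Proof. by apply/rowP => -[[|[|[|//]]] ?]; rewrite !mxE /=; ring. Qed.

Lemma cross_suml I (r : seq I) (F : I -> 'rV[R]_3) v :
  cross (\sum_(k <- r) F k) v = \sum_(k <- r) cross (F k) v.
Proof.
apply: (big_ind2 (fun x y => cross x v = y)) => // [|x1 y1 x2 y2 <- <-].
  by apply/rowP => -[[|[|[|//]]] ?]; rewrite !mxE /=; ring.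
by rewrite crossDl.
Qed.

Lemma cross_sumr I (r : seq I) u (F : I -> 'rV[R]_3) :
  cross u (\sum_(k <- r) F k) = \sum_(k <- r) cross u (F k).
Proof.
by rewrite crossC cross_suml -sumrN; apply: eq_bigr => k _; rewrite -crossC.
Qed.

Lemma sum_ord3 (F : 'I_3 -> R) :
  \sum_j F j = F (inord 0) + F (inord 1) + F (inord 2).
Proof.
rewrite !big_ord_recl big_ord0 addr0 addrA.
by congr (F _ + F _ + F _); apply/val_inj; rewrite /= inordK.
Qed.

Lemma mdot_crossl u v : mdot (cross u v) v = 0.
Proof.
(* [cross] takes its index 2 in ring_scope, i.e. as [2%R : nat]. *)
have two : (2%R : nat) = 2%N by [].
by rewrite /mdot big_ord1 sum_ord3 !mxE /= !inordK // !two; ring.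
Qed.

Lemma cross_midpoint_rule c q0 q1 v0 v1 :
  cross q1 (c *: v1) - cross q0 (c *: v0) =
  cross (mid q0 q1) (c *: (v1 - v0)) + cross (q1 - q0) (c *: mid v0 v1).
Proof. by apply/rowP => -[[|[|[|//]]] ?]; rewrite /mid !mxE /=; field. Qed.

End Cross.

Section Springs.
Variables (R : realType) (nel N : nat) (A : 'M[R]_(nel, N)) (l0 : 'I_nel -> R).

Lemma jac_Ctilde q i j d :
  jac (Ctilde A l0) q i j d = 2 * (A *m q) i d * A i j / l0 i ^+ 2.
Proof.
set r := row i (A *m q); set s := row i (A *m delta_mx j d).
have sE y : s 0 y = A i j * (y == d)%:R.
  rewrite !mxE (bigD1 j) //= big1 ?addr0 => [|k /negPf kj]; last first.
    by rewrite mxE kj mulr0.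
  by rewrite mxE eqxx.
have mdot_rs : mdot r s = (A *m q) i d * A i j.
  rewrite /mdot big_ord1 (bigD1 d) //= big1 ?addr0 => [|y /negPf yd].
    by rewrite sE eqxx mulr1 mxE.
  by rewrite sE yd !mulr0.
rewrite /jac /partial; apply: (@derive_along_quadratic _ _ _ _ _ _ (mdot s s / l0 i ^+ 2)).
move=> t; rewrite /Ctilde.
have -> : row i (A *m (t *: delta_mx j d + q)) = t *: s + r.
  by rewrite mulmxDr -scalemxAr linearD linearZ.
by rewrite mdot_line_sq mdot_rs -/r; ring.
Qed.

Lemma row_jacT_Ctilde q w k :
  row k (jacT_apply (Ctilde A l0) q w) =
  \sum_i (2 * w i / l0 i ^+ 2 * A i k) *: row i (A *m q).
Proof.
apply/rowP => d; rewrite !mxE summxE; apply: eq_bigr => i _.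
by rewrite !mxE jac_Ctilde !mxE; ring.
Qed.

Lemma spring_torque_free q w :
  \sum_k cross (row k q) (row k (jacT_apply (Ctilde A l0) q w)) = 0.
Proof.
under eq_bigr => k _ do rewrite row_jacT_Ctilde cross_sumr.
rewrite exchange_big /=; apply: big1 => i _.
under eq_bigr => k _ do rewrite crossZr -scalerA -crossZl.
have qbarE : \sum_k A i k *: row k q = row i (A *m q).
  by rewrite row_mul mulmx_sum_row; apply: eq_bigr => k _; rewrite mxE.
by rewrite -scaler_sumr -cross_suml qbarE crossxx scaler0.
Qed.

End Springs.

Lemma angmom_midpoint_rule (R : realType) N (m : 'I_N -> R) (q0 q1 v0 v1 : 'M[R]_(N, 3)) :
  angmom m q1 v1 - angmom m q0 v0 =
  \sum_k (cross (row k (mid q0 q1)) (m k *: row k (v1 - v0))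
          + cross (row k (q1 - q0)) (m k *: row k (mid v0 v1))).
Proof.
rewrite /angmom -sumrB; apply: eq_bigr => k _.
rewrite cross_midpoint_rule.
by congr (cross _ (_ *: _) + cross _ (_ *: _)); apply/rowP => j; rewrite !mxE.
Qed.

Theorem mainTheorem4 (R : realType) (N nel : nat)
  (HN : (0 < N)%N) (Hnel : (0 < nel)%N)
  (m : 'I_N -> R) (Hm : forall k, 0 < m k)
  (Vext : 'M[R]_(N, 3) -> R) (HV : C1_fun Vext)
  (h : R) (Hh : 0 < h)
  (kap l0 : 'I_nel -> R) (Hkap : forall i, 0 < kap i) (Hl0 : forall i, 0 < l0 i)
  (A : 'M[R]_(nel, N))
  (q0 q1 v0 v1 : 'M[R]_(N, 3)) (C0 C1 : 'I_nel -> R)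
  (HC0 : forall i, 0 < C0 i) (HC1 : forall i, 0 < C1 i)
  (Hq : q1 - q0 = h *: mid v0 v1)
  (Hv : diag_mx (\row_k m k) *m (v1 - v0) =
        - (h *: (disc_grad_ext Vext q0 q1
                 + jacT_apply (Ctilde A l0) (mid q0 q1) (disc_grad_int kap l0 C0 C1))))
  (HC : forall i, C1 i - C0 i = h * jac_apply (Ctilde A l0) (mid q0 q1) (mid v0 v1) i)
  (b : 'rV[R]_3)
  (Hb : forall k : 'I_N, row k (disc_grad_ext Vext q0 q1) = - b) :
  mdot (angmom m q1 v1 - angmom m q0 v0) b = 0.
Proof.
set Q := mid q0 q1; set P := jacT_apply (Ctilde A l0) Q (disc_grad_int kap l0 C0 C1).
have momentum k : m k *: row k (v1 - v0) = h *: b - h *: row k P.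
  move/(congr1 (row k)): Hv; rewrite row_mul row_diag_mx -scalemxAl -rowE mxE => ->.
  by rewrite linearN linearZ linearD /= Hb -/P scalerDr scalerN opprD opprK.
have drift k : row k (q1 - q0) = h *: row k (mid v0 v1) by rewrite Hq linearZ.
rewrite angmom_midpoint_rule.
under eq_bigr => k _ do
  rewrite momentum drift crossZr crossZl crossxx !scaler0 addr0 crossBr !crossZr.
rewrite sumrB -!scaler_sumr spring_torque_free scaler0 subr0 -cross_suml.
by rewrite mdotZl mdot_crossl mulr0.
Qed.
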